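(* Let $c_1,\dots,c_k\in(0,\infty)$ be fixed constants. With probability one, there exists a tuning parameter $\lambda\in(0,\infty)^k$ such that $$\frac{\lambda}{2g'(\|Y-X\hat\beta^\lambda\|_2^2)}=\Big(c_1\|(XP_1M_1^{+})^\top\varepsilon\|_{q_1}^*,\dots,c_k\|(XP_kM_k^{+})^\top\varepsilon\|_{q_k}^*\Big)^\top.$$
   Context: Standing setup. Model: $Y=X\beta^*+\varepsilon$ with $Y\in\mathbb{R}^n$, $X\in\mathbb{R}^{n\times p}$, $\beta^*\in\mathbb{R}^p$, $\varepsilon\in\mathbb{R}^n$ (random; no distributional assumptions beyond those below). Link function $g:\mathbb{R}\to[0,\infty)$ with $g(0)=0$, $g$ continuous and strictly increasing on $[0,\infty)$, continuously differentiable on $(0,\infty)$ with strictly positive and non-increasing derivative $g'$, and such that $\alpha\mapsto g(\|\alpha\|_2^2)$ is strictly convex on $\mathbb{R}^n$. Penalty: $k\ge1$, matrices $M_1,\dots,M_k\in\mathbb{R}^{p\times p}$ with $\bigcap_{j=1}^k\mathrm{Ker}(M_j)=\{0\}$, exponents $q_j\ge1$, $\|\cdot\|_{q_j}$ the $\ell_{q_j}$-norm on $\mathbb{R}^p$, and $\|\cdot\|_{q_j}^*$ its dual norm. For $\lambda\in(0,\infty)^k$, $\hat\beta^\lambda$ denotes any element of $\arg\min_{\beta\in\mathbb{R}^p}\{g(\|Y-X\beta\|_2^2)+\sum_{j=1}^k\lambda_j\|M_j\beta\|_{q_j}\}$ (the quantity $\|Y-X\hat\beta^\lambda\|_2^2$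 does not depend on which minimizer is chosen). $A^+$ denotes the Moore–Penrose pseudoinverse; $P_1,\dots,P_k\in\mathbb{R}^{p\times p}$ are fixed projection matrices with $\sum_{j=1}^kP_jM_j^+M_j=I_{p\times p}$. Noise assumption: with probability one, $Y\neq0$ and $\min_{j}\|(XP_jM_j^{+})^\top\varepsilon\|_{q_j}^*>0$. *)

(* classical reals. Vectors in R^n are functions nat -> R of which
   only the indices < n matter; matrices are functions nat -> nat -> R. *)
From Stdlib Require Import Reals Lra Lia ClassicalEpsilon.
Open Scope R_scope.

Definition vec := nat -> R.
Definition mat := nat -> nat -> R.

Fixpoint rsum (n : nat) (f : nat -> R) : R :=
  match n with O => 0 | S m => rsum m f + f m end.

Definition mv (n : nat) (A : mat) (x : vec) : vec :=
  fun i => rsum n (fun j => A i j * x j).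
Definition mm (n : nat) (A B : mat) : mat :=
  fun i j => rsum n (fun l => A i l * B l j).
Definition tr (A : mat) : mat := fun i j => A j i.
Definition idm : mat := fun i j => if Nat.eqb i j then 1 else 0.

Definition mat_eq (m n : nat) (A B : mat) : Prop :=
  forall i j, (i < m)%nat -> (j < n)%nat -> A i j = B i j.

Definition dot (n : nat) (x y : vec) : R := rsum n (fun i => x i * y i).
Definition sqnorm2 (n : nat) (x : vec) : R := dot n x x.

Definition powr (x q : R) : R := if Rlt_dec 0 x then Rpower x q else 0.

Definition lqnorm (n : nat) (q : R) (x : vec) : R :=
  powr (rsum n (fun i => powr (Rabs (x i)) q)) (/ q).

Definition dualnorm (n : nat) (q : R) (v : vec) : R :=
  epsilon (inhabits 0)
    (fun d => is_lub (fun t => exists x : vec, lqnorm n q x <= 1 /\ t = dot n v x) d).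

Definition is_pinv (m n : nat) (A Ap : mat) : Prop :=
  mat_eq m n (mm m (mm n A Ap) A) A /\
  mat_eq n m (mm n (mm m Ap A) Ap) Ap /\
  mat_eq m m (tr (mm n A Ap)) (mm n A Ap) /\
  mat_eq n n (tr (mm m Ap A)) (mm m Ap A).

Definition msum (k : nat) (F : nat -> mat) : mat :=
  fun i j => rsum k (fun l => F l i j).

Definition resid (n p : nat) (X : mat) (Y b : vec) : R :=
  sqnorm2 n (fun i => Y i - mv p X b i).

Definition objective (n p k : nat) (g : R -> R) (X : mat) (Y : vec)
  (M : nat -> mat) (q : nat -> R) (lam : vec) (b : vec) : R :=
  g (resid n p X Y b) + rsum k (fun j => lam j * lqnorm p (q j) (mv p (M j) b)).

Definition is_minimizer (n p k : nat) (g : R -> R) (X : mat) (Y : vec)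
  (M : nat -> mat) (q : nat -> R) (lam : vec) (b : vec) : Prop :=
  forall b' : vec, objective n p k g X Y M q lam b <= objective n p k g X Y M q lam b'.

From Stdlib Require Import Reals Lra Lia Classical ClassicalEpsilon FunctionalExtensionality.
From Coquelicot Require Import Coquelicot Compactness.
Open Scope R_scope.

(* Put a_j := c_j ||(X P_j M_j^+)^T eps||_{q_j}^*, which is positive by the noise assumption.
   The convex function b |-> ||Y - X b||^2 / 2 + sum_j a_j ||M_j b||_{q_j} is continuous and,
   since sum_j P_j M_j^+ M_j = I, coercive; so it has a minimiser b*, whose residual R0 is
   positive because Y <> 0.  The first-order condition at b* together with the convexity of
   b |-> g(||Y - X b||^2) shows that b* also minimises the objective with tuning parameter
   lam := 2 g'(R0) a.  Strict convexity of alpha |-> g(||alpha||^2) makes the residual vector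
   the same for every minimiser, so every minimiser has residual R0 and lam / (2 g'(R0)) = a. *)

Lemma rsum_ext n f g : (forall i, (i < n)%nat -> f i = g i) -> rsum n f = rsum n g.
Proof.
  induction n as [|n IH]; intros H; simpl; [reflexivity|].
  rewrite IH by (intros; apply H; lia). now rewrite H by lia.
Qed.

Lemma rsum_plus n f g : rsum n (fun i => f i + g i) = rsum n f + rsum n g.
Proof. induction n as [|n IH]; simpl; [lra|]. rewrite IH; ring. Qed.

Lemma rsum_scal n c f : rsum n (fun i => c * f i) = c * rsum n f.
Proof. induction n as [|n IH]; simpl; [ring|]. rewrite IH; ring. Qed.

Lemma rsum_le n f g : (forall i, (i < n)%nat -> f i <= g i) -> rsum n f <= rsum n g.
Proof.
  induction n as [|n IH]; intros H; simpl; [lra|].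
  apply Rplus_le_compat; [apply IH; intros; apply H|apply H]; lia.
Qed.

Lemma rsum_eq0 n f : (forall i, (i < n)%nat -> f i = 0) -> rsum n f = 0.
Proof.
  intros H. transitivity (rsum n (fun _ => 0)); [now apply rsum_ext|]. clear H.
  induction n as [|n IH]; simpl; [reflexivity|]. rewrite IH; ring.
Qed.

Lemma rsum_nonneg n f : (forall i, (i < n)%nat -> 0 <= f i) -> 0 <= rsum n f.
Proof. intros H. rewrite <- (rsum_eq0 n (fun _ => 0)) by auto. now apply rsum_le. Qed.

Lemma rsum_ge_term n f l : (forall i, (i < n)%nat -> 0 <= f i) -> (l < n)%nat -> f l <= rsum n f.
Proof.
  induction n as [|n IH]; intros H Hl; simpl; [lia|].
  assert (0 <= rsum n f) by (apply rsum_nonneg; intros; apply H; lia).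
  destruct (Nat.eq_dec l n) as [->|Hne]; [lra|].
  assert (f l <= rsum n f) by (apply IH; [intros; apply H|]; lia).
  assert (0 <= f n) by (apply H; lia). lra.
Qed.

Lemma Rabs_rsum_le n f : Rabs (rsum n f) <= rsum n (fun i => Rabs (f i)).
Proof.
  induction n as [|n IH]; simpl; [rewrite Rabs_R0; lra|].
  eapply Rle_trans; [apply Rabs_triang|lra].
Qed.

Lemma rsum_comm n m (f : nat -> nat -> R) :
  rsum n (fun i => rsum m (f i)) = rsum m (fun j => rsum n (fun i => f i j)).
Proof.
  induction n as [|n IH]; simpl; [symmetry; now apply rsum_eq0|].
  now rewrite IH, <- rsum_plus.
Qed.

Lemma rsum_idm n i (f : vec) : (i < n)%nat -> rsum n (fun l => idm i l * f l) = f i.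
Proof.
  induction n as [|n IH]; intros Hi; simpl; [lia|]. unfold idm at 2.
  destruct (Nat.eqb_spec i n) as [->|Hne].
  - rewrite rsum_eq0; [ring|]. intros l Hl. unfold idm.
    destruct (Nat.eqb_spec n l); [lia|ring].
  - rewrite IH by lia. ring.
Qed.

Lemma mv_ext p A u w i : (forall l, (l < p)%nat -> u l = w l) -> mv p A u i = mv p A w i.
Proof. intros H. apply rsum_ext. intros l Hl. now rewrite H. Qed.

Lemma mv_comb p A a b u w i :
  mv p A (fun l => a * u l + b * w l) i = a * mv p A u i + b * mv p A w i.
Proof. unfold mv. rewrite <- !rsum_scal, <- rsum_plus. apply rsum_ext; intros; ring. Qed.

Lemma mv_zero p A i : mv p A (fun _ => 0) i = 0.
Proof. apply rsum_eq0; intros; ring. Qed.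

Lemma sqnorm2_ext n u w : (forall i, (i < n)%nat -> u i = w i) -> sqnorm2 n u = sqnorm2 n w.
Proof. intros H. apply rsum_ext. intros i Hi. now rewrite H. Qed.

Lemma sqnorm2_nonneg n u : 0 <= sqnorm2 n u.
Proof. apply rsum_nonneg; intros; apply Rle_0_sqr. Qed.

Lemma sqnorm2_eq0 n u : sqnorm2 n u = 0 -> forall i, (i < n)%nat -> u i = 0.
Proof.
  intros H i Hi.
  assert (u i * u i <= sqnorm2 n u)
    by (apply (rsum_ge_term n (fun i => u i * u i)); auto; intros; apply Rle_0_sqr).
  pose proof (Rle_0_sqr (u i)). unfold Rsqr in *. nra.
Qed.

Lemma sqnorm2_sub_scal n r w s :
  sqnorm2 n (fun i => r i - s * w i) = sqnorm2 n r - 2 * s * dot n r w + s * s * sqnorm2 n w.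
Proof.
  unfold sqnorm2, dot.
  rewrite (rsum_ext n _ (fun i => (r i * r i + (- 2 * s) * (r i * w i)) + (s * s) * (w i * w i)))
    by (intros; ring).
  rewrite !rsum_plus, !rsum_scal. ring.
Qed.

Lemma Rpower_gt0 x q : 0 < Rpower x q.
Proof. apply exp_pos. Qed.

Lemma powr_gt0_eq x q : 0 < x -> powr x q = Rpower x q.
Proof. intros H; unfold powr; destruct (Rlt_dec 0 x); [reflexivity|lra]. Qed.

Lemma powr_le0_eq x q : x <= 0 -> powr x q = 0.
Proof. intros H; unfold powr; destruct (Rlt_dec 0 x); [lra|reflexivity]. Qed.

Lemma powr_nonneg x q : 0 <= powr x q.
Proof. unfold powr; destruct (Rlt_dec 0 x); [left; apply Rpower_gt0|lra]. Qed.

Lemma powr_lt x y q : 0 < q -> 0 <= x < y -> powr x q < powr y q.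
Proof.
  intros Hq [Hx Hxy]. rewrite (powr_gt0_eq y) by lra.
  destruct Hx as [Hx|<-].
  - rewrite powr_gt0_eq by lra. apply Rlt_Rpower_l; lra.
  - rewrite powr_le0_eq by lra. apply Rpower_gt0.
Qed.

Lemma powr_le x y q : 0 < q -> 0 <= x <= y -> powr x q <= powr y q.
Proof.
  intros Hq [Hx [Hxy|<-]]; [left; apply powr_lt; lra|lra].
Qed.

Lemma powr_powr_inv x q : 0 < q -> 0 <= x -> powr (powr x q) (/ q) = x.
Proof.
  intros Hq [Hx|<-]; [|rewrite (powr_le0_eq 0) by lra; apply powr_le0_eq; lra].
  rewrite (powr_gt0_eq x q Hx), powr_gt0_eq by apply Rpower_gt0.
  rewrite Rpower_mult, Rinv_r, Rpower_1 by lra; reflexivity.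
Qed.

Lemma powr_inv_powr x q : 0 < q -> 0 <= x -> powr (powr x (/ q)) q = x.
Proof.
  intros Hq Hx. rewrite <- (Rinv_inv q) at 2.
  apply powr_powr_inv; [apply Rinv_0_lt_compat|]; assumption.
Qed.

Lemma powr_mult a b q : 0 <= a -> 0 <= b -> powr (a * b) q = powr a q * powr b q.
Proof.
  intros [Ha|<-] [Hb|<-].
  - rewrite !powr_gt0_eq by nra. now rewrite Rpower_mult_distr.
  - rewrite Rmult_0_r, (powr_le0_eq 0) by lra. ring.
  - rewrite Rmult_0_l, (powr_le0_eq 0) by lra. ring.
  - rewrite Rmult_0_l, (powr_le0_eq 0) by lra. ring.
Qed.

Lemma Rpower_tangent q m y : 1 <= q -> 0 < m -> 0 < y ->
  Rpower m q + q * Rpower m (q - 1) * (y - m) <= Rpower y q.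
Proof.
  intros Hq Hm Hy.
  assert (Hd : forall c, 0 < c -> derivable_pt_lim (fun x => Rpower x q) c (q * Rpower c (q - 1)))
    by (intros; now apply derivable_pt_lim_power).
  destruct (Rtotal_order m y) as [Hlt|[<-|Hgt]]; [|lra|].
  - destruct (MVT_cor2 _ _ m y Hlt (fun c Hc => Hd c ltac:(lra))) as [c [Hc Hmc]].
    cbv beta in Hmc.
    assert (Rpower m (q - 1) <= Rpower c (q - 1)) by (apply Rle_Rpower_l; lra).
    assert (0 <= q * (Rpower c (q - 1) - Rpower m (q - 1)) * (y - m))
      by (apply Rmult_le_pos; [apply Rmult_le_pos|]; lra).
    nra.
  - destruct (MVT_cor2 _ _ y m Hgt (fun c Hc => Hd c ltac:(lra))) as [c [Hc Hmc]].
    cbv beta in Hmc.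
    assert (Rpower c (q - 1) <= Rpower m (q - 1)) by (apply Rle_Rpower_l; lra).
    assert (0 <= q * (Rpower m (q - 1) - Rpower c (q - 1)) * (m - y))
      by (apply Rmult_le_pos; [apply Rmult_le_pos|]; lra).
    nra.
Qed.

Lemma powr_tangent q m y : 1 <= q -> 0 < m -> 0 <= y ->
  powr m q + q * Rpower m (q - 1) * (y - m) <= powr y q.
Proof.
  intros Hq Hm [Hy|<-]; rewrite (powr_gt0_eq m) by lra.
  - rewrite powr_gt0_eq by lra. now apply Rpower_tangent.
  - assert (Rpower m (q - 1) * m = Rpower m q).
    { rewrite <- (Rpower_1 m) at 2 by lra. rewrite <- Rpower_plus. f_equal; ring. }
    rewrite powr_le0_eq by lra. pose proof (Rpower_gt0 m q). nra.
Qed.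

Lemma powr_convex q a b t : 1 <= q -> 0 <= a -> 0 <= b -> 0 <= t <= 1 ->
  powr (t * a + (1 - t) * b) q <= t * powr a q + (1 - t) * powr b q.
Proof.
  intros Hq Ha Hb Ht. set (m := t * a + (1 - t) * b).
  pose proof (powr_nonneg a q); pose proof (powr_nonneg b q).
  destruct (Req_dec m 0) as [Hm|Hm]; [rewrite Hm, powr_le0_eq; nra|].
  assert (Hm0 : 0 < m) by (unfold m in *; nra).
  pose proof (powr_tangent q m a Hq Hm0 Ha). pose proof (powr_tangent q m b Hq Hm0 Hb).
  set (D := q * Rpower m (q - 1)) in *.
  assert (E : t * (powr m q + D * (a - m)) + (1 - t) * (powr m q + D * (b - m)) = powr m q)
    by (unfold m; ring).
  nra.
Qed.

Lemma powr_continuity q x : 0 < q -> continuity_pt (fun y => powr y q) x.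
Proof.
  intros Hq. destruct (Rtotal_order x 0) as [Hx|[->|Hx]].
  - apply (continuity_pt_locally_ext (fun _ => 0) _ (- x)); [lra| |].
    + intros y Hy. unfold Rdist in Hy. apply Rabs_def2 in Hy. rewrite powr_le0_eq; lra.
    + now apply continuity_pt_const.
  - intros e He. exists (Rpower e (/ q)). split; [apply Rpower_gt0|].
    intros y [_ Hy]. simpl in *. unfold Rdist in *.
    rewrite Rminus_0_r in Hy. rewrite (powr_le0_eq 0), Rminus_0_r by lra.
    rewrite Rabs_pos_eq by apply powr_nonneg.
    rewrite <- (powr_inv_powr e q Hq) by lra. rewrite (powr_gt0_eq e) by lra.
    destruct (Rle_dec y 0) as [Hy0|Hy0].
    + rewrite powr_le0_eq, powr_gt0_eq by (apply Rpower_gt0 || lra). apply Rpower_gt0.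
    + apply powr_lt; [lra|]. rewrite Rabs_pos_eq in Hy; lra.
  - apply (continuity_pt_locally_ext (fun y => Rpower y q) _ x); [lra| |].
    + intros y Hy. unfold Rdist in Hy. apply Rabs_def2 in Hy. rewrite powr_gt0_eq; lra.
    + apply derivable_continuous_pt. eexists. apply derivable_pt_lim_power; lra.
Qed.

Lemma powr_1_l q : powr 1 q = 1.
Proof. rewrite powr_gt0_eq by lra. unfold Rpower. now rewrite ln_1, Rmult_0_r, exp_0. Qed.

Section LqNorm.

Variables (p : nat) (q : R).
Hypothesis Hq : 0 < q.

Lemma lqnorm_nonneg x : 0 <= lqnorm p q x.
Proof. apply powr_nonneg. Qed.

Lemma lqnorm_ext x y : (forall i, (i < p)%nat -> x i = y i) -> lqnorm p q x = lqnorm p q y.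
Proof. intros H. unfold lqnorm. f_equal. apply rsum_ext. intros i Hi. now rewrite H. Qed.

Lemma powr_lqnorm x : powr (lqnorm p q x) q = rsum p (fun i => powr (Rabs (x i)) q).
Proof. apply powr_inv_powr; [lra|]. apply rsum_nonneg; intros; apply powr_nonneg. Qed.

Lemma lqnorm_zero : lqnorm p q (fun _ => 0) = 0.
Proof.
  unfold lqnorm. rewrite rsum_eq0; [apply powr_le0_eq; lra|].
  intros. rewrite Rabs_R0. apply powr_le0_eq; lra.
Qed.

Lemma Rabs_le_lqnorm x l : (l < p)%nat -> Rabs (x l) <= lqnorm p q x.
Proof.
  intros Hl. rewrite <- (powr_powr_inv (Rabs (x l)) q) by (lra || apply Rabs_pos).
  apply powr_le; [apply Rinv_0_lt_compat; lra|split; [apply powr_nonneg|]].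
  apply (rsum_ge_term p (fun i => powr (Rabs (x i)) q)); auto. intros; apply powr_nonneg.
Qed.

Lemma lqnorm_eq0 x : lqnorm p q x = 0 -> forall i, (i < p)%nat -> x i = 0.
Proof.
  intros H i Hi. pose proof (Rabs_le_lqnorm x i Hi).
  destruct (Req_dec (x i) 0) as [E|E]; [exact E|]. pose proof (Rabs_pos_lt _ E). lra.
Qed.

Lemma lqnorm_scal c x : 0 <= c -> lqnorm p q (fun i => c * x i) = c * lqnorm p q x.
Proof.
  intros Hc. unfold lqnorm.
  rewrite (rsum_ext p _ (fun i => powr c q * powr (Rabs (x i)) q)).
  2:{ intros i _. rewrite Rabs_mult, (Rabs_pos_eq c) by exact Hc.
      apply powr_mult; [exact Hc|apply Rabs_pos]. }
  rewrite rsum_scal, powr_mult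
    by (apply powr_nonneg || (apply rsum_nonneg; intros; apply powr_nonneg)).
  now rewrite powr_powr_inv.
Qed.

Lemma lqnorm_triangle x y : 1 <= q ->
  lqnorm p q (fun i => x i + y i) <= lqnorm p q x + lqnorm p q y.
Proof.
  intros Hq1. set (A := lqnorm p q x). set (B := lqnorm p q y).
  destruct (lqnorm_nonneg x) as [HA|A0]; [|fold A in A0].
  2:{ rewrite <- A0, Rplus_0_l. right. apply lqnorm_ext. intros i Hi.
      rewrite (lqnorm_eq0 x (eq_sym A0) i Hi). ring. }
  destruct (lqnorm_nonneg y) as [HB|B0]; [|fold B in B0].
  2:{ rewrite <- B0, Rplus_0_r. right. apply lqnorm_ext. intros i Hi.
      rewrite (lqnorm_eq0 y (eq_sym B0) i Hi). ring. }
  fold A B in HA, HB.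
  set (t := A / (A + B)).
  assert (Ht : 0 <= t <= 1) by (unfold t; split; apply Rmult_le_reg_r with (A + B);
    unfold Rdiv; rewrite ?Rmult_assoc, ?Rinv_l by lra; lra).
  set (u i := / A * Rabs (x i)). set (v i := / B * Rabs (y i)).
  assert (Hunit : forall z C, lqnorm p q z = C -> 0 < C ->
            rsum p (fun i => powr (/ C * Rabs (z i)) q) = 1).
  { intros z C Hz HC.
    rewrite (rsum_ext p _ (fun i => powr (Rabs (/ C * z i)) q))
      by (intros; rewrite Rabs_mult, (Rabs_pos_eq (/ C)); [|left; apply Rinv_0_lt_compat]; auto).
    rewrite <- powr_lqnorm, lqnorm_scal, Hz, Rinv_l by (lra || (left; now apply Rinv_0_lt_compat)).
    apply powr_1_l. }
  (* [|x| + |y|] is [A + B] times a convex combination of the unit vectors [u] and [v] *)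
  assert (Hsplit : forall i, Rabs (x i) + Rabs (y i) = (A + B) * (t * u i + (1 - t) * v i))
    by (intros; unfold t, u, v; field; lra).
  assert (Hconv : rsum p (fun i => powr (t * u i + (1 - t) * v i) q) <= 1).
  { eapply Rle_trans.
    - apply rsum_le. intros i _. apply powr_convex; [exact Hq1| | |exact Ht];
        apply Rmult_le_pos; (apply Rabs_pos || (left; apply Rinv_0_lt_compat; lra)).
    - rewrite rsum_plus, !rsum_scal. unfold u, v. rewrite !Hunit by auto. lra. }
  assert (Hpow : rsum p (fun i => powr (Rabs (x i + y i)) q) <= powr (A + B) q).
  { eapply Rle_trans.
    - apply (rsum_le p _ (fun i => powr ((A + B) * (t * u i + (1 - t) * v i)) q)).
      intros i _. apply powr_le; [lra|].
      split; [apply Rabs_pos|]. rewrite <- Hsplit. apply Rabs_triang.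
    - rewrite (rsum_ext p _ (fun i => powr (A + B) q * powr (t * u i + (1 - t) * v i) q)).
      + rewrite rsum_scal. pose proof (powr_nonneg (A + B) q). nra.
      + intros i _. apply powr_mult; [lra|].
        assert (0 <= u i /\ 0 <= v i) as [Hu Hv] by (unfold u, v; split;
          apply Rmult_le_pos; (apply Rabs_pos || (left; apply Rinv_0_lt_compat; lra))).
        nra. }
  rewrite <- (powr_powr_inv (A + B) q) by lra. unfold lqnorm at 1.
  apply powr_le; [apply Rinv_0_lt_compat; lra|].
  split; [apply rsum_nonneg; intros; apply powr_nonneg|exact Hpow].
Qed.

End LqNorm.

Definition vcont (p : nat) (F : vec -> R) : Prop :=
  forall b e, 0 < e -> exists d, 0 < d /\
    forall b', (forall i, (i < p)%nat -> Rabs (b' i - b i) < d) -> Rabs (F b' - F b) < e.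

Section VectorContinuity.

Variable p : nat.

Lemma vcont_const c : vcont p (fun _ => c).
Proof. intros b e He. exists 1. split; [lra|]. intros. rewrite Rminus_diag, Rabs_R0; lra. Qed.

Lemma vcont_coord l : (l < p)%nat -> vcont p (fun b => b l).
Proof. intros Hl b e He. exists e. split; auto. Qed.

Lemma vcont_plus F G : vcont p F -> vcont p G -> vcont p (fun b => F b + G b).
Proof.
  intros HF HG b e He.
  destruct (HF b (e / 2)) as [d1 [Hd1 H1]]; [lra|].
  destruct (HG b (e / 2)) as [d2 [Hd2 H2]]; [lra|].
  exists (Rmin d1 d2). split; [now apply Rmin_pos|]. intros b' Hb'.
  assert (Rabs (F b' - F b) < e / 2)
    by (apply H1; intros; eapply Rlt_le_trans; [apply Hb'; auto|apply Rmin_l]).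
  assert (Rabs (G b' - G b) < e / 2)
    by (apply H2; intros; eapply Rlt_le_trans; [apply Hb'; auto|apply Rmin_r]).
  replace (F b' + G b' - (F b + G b)) with ((F b' - F b) + (G b' - G b)) by ring.
  eapply Rle_lt_trans; [apply Rabs_triang|lra].
Qed.

Lemma vcont_comp f F : (forall x, continuity_pt f x) -> vcont p F -> vcont p (fun b => f (F b)).
Proof.
  intros Hf HF b e He. destruct (Hf (F b) e He) as [a [Ha H1]].
  destruct (HF b a Ha) as [d [Hd H2]]. exists d. split; [exact Hd|]. intros b' Hb'.
  destruct (Req_dec (F b') (F b)) as [E|E]; [rewrite E, Rminus_diag, Rabs_R0; lra|].
  apply (H1 (F b')). split; [split; [exact I|congruence]|]. now apply H2.
Qed.

Lemma vcont_scal c F : vcont p F -> vcont p (fun b => c * F b).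
Proof.
  apply vcont_comp. intros x. apply derivable_continuous_pt. reg.
Qed.

Lemma vcont_rsum m (Fs : nat -> vec -> R) : (forall j, (j < m)%nat -> vcont p (Fs j)) ->
  vcont p (fun b => rsum m (fun j => Fs j b)).
Proof.
  induction m as [|m IH]; intros H; simpl; [apply vcont_const|].
  apply vcont_plus; [apply IH; intros|apply H]; auto.
Qed.

Lemma vcont_ext F G : (forall b, F b = G b) -> vcont p F -> vcont p G.
Proof.
  intros E HF b e He. destruct (HF b e He) as [d [Hd H]].
  exists d. split; [exact Hd|]. intros. rewrite <- !E. auto.
Qed.

Lemma vcont_mv A i : vcont p (fun b => mv p A b i).
Proof.
  apply (vcont_rsum p (fun l b => A i l * b l)). intros. now apply vcont_scal, vcont_coord.
Qed.

Lemma vcont_lqnorm q (G : vec -> vec) : 0 < q ->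
  (forall i, (i < p)%nat -> vcont p (fun b => G b i)) -> vcont p (fun b => lqnorm p q (G b)).
Proof.
  intros Hq HG. apply (vcont_comp (fun s => powr s (/ q))).
  { intros. apply powr_continuity. now apply Rinv_0_lt_compat. }
  apply (vcont_rsum p (fun i b => powr (Rabs (G b i)) q)). intros i Hi.
  apply (vcont_comp (fun s => powr s q)); [intros; now apply powr_continuity|].
  apply (vcont_comp Rabs); [apply Rcontinuity_abs|auto].
Qed.

End VectorContinuity.

Lemma inf_approx {A : Type} (S : A -> Prop) (F : A -> R) L :
  (exists a, S a) -> (forall a, S a -> L <= F a) ->
  exists m, (forall a, S a -> m <= F a) /\ forall e, 0 < e -> exists a, S a /\ F a < m + e.
Proof.
  intros [a0 Ha0] HL.
  set (E y := exists a, S a /\ y = - F a).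
  assert (Hb : bound E) by (exists (- L); intros y [a [Ha ->]]; specialize (HL a Ha); lra).
  destruct (completeness E Hb (ex_intro _ (- F a0) (ex_intro _ a0 (conj Ha0 eq_refl))))
    as [u [Hub Hlub]].
  exists (- u). split.
  - intros a Ha. enough (- F a <= u) by lra. apply Hub. now exists a.
  - intros e He. apply NNPP. intros Hn.
    enough (u <= u - e) by lra. apply Hlub. intros y [a [Ha ->]].
    destruct (Rlt_le_dec (F a) (- u + e)) as [Hlt|]; [|lra].
    exfalso. apply Hn. now exists a.
Qed.

Definition in_box (p : nat) (B : R) (b : vec) : Prop := forall i, (i < p)%nat -> Rabs (b i) <= B.

(* Points of [Tn p R], the type of Coquelicot's compactness theorem, seen as vectors. *)
Fixpoint of_Tn (p : nat) : Tn p R -> vec :=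
  match p return Tn p R -> vec with
  | O => fun _ _ => 0
  | S p' => fun x i => match i with O => fst x | S i' => of_Tn p' (snd x) i' end
  end.

Fixpoint to_Tn (p : nat) (b : vec) : Tn p R :=
  match p with O => tt | S p' => (b O, to_Tn p' (fun i => b (S i))) end.

Fixpoint const_Tn (p : nat) (c : R) : Tn p R :=
  match p with O => tt | S p' => (c, const_Tn p' c) end.

Lemma of_to_Tn p b i : (i < p)%nat -> of_Tn p (to_Tn p b) i = b i.
Proof.
  revert b i; induction p as [|p IH]; intros b [|i] Hi; simpl; auto; try lia.
  rewrite IH; auto; lia.
Qed.

Lemma bounded_to_Tn p B b :
  in_box p B b -> bounded_n p (const_Tn p (- B)) (const_Tn p B) (to_Tn p b).
Proof.
  revert b; induction p as [|p IH]; intros b Hb; simpl; [exact I|].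
  split.
  - specialize (Hb O ltac:(lia)). pose proof (Rle_abs (b O)). pose proof (Rle_abs (- b O)).
    rewrite Rabs_Ropp in *. lra.
  - apply IH. intros i Hi. apply Hb. lia.
Qed.

Lemma in_box_of_Tn p B x :
  bounded_n p (const_Tn p (- B)) (const_Tn p B) x -> in_box p B (of_Tn p x).
Proof.
  induction p as [|p IH]; intros H [|i] Hi; simpl in *; try lia;
    destruct x as [x1 x2], H as [H1 H2].
  - now apply Rabs_le.
  - apply IH; auto; lia.
Qed.

Lemma close_of_Tn p d x t : close_n p d x t ->
  forall i, (i < p)%nat -> Rabs (of_Tn p x i - of_Tn p t i) < d.
Proof.
  induction p as [|p IH]; intros H [|i] Hi; simpl in *; try lia; destruct x, t, H as [H1 H2].
  - exact H1.
  - apply IH; auto; lia.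
Qed.

Lemma vcont_box_min p B F : vcont p F -> (forall b, 0 <= F b) -> 0 <= B ->
  exists bs, in_box p B bs /\ forall b, in_box p B b -> F bs <= F b.
Proof.
  intros HF HF0 HB.
  destruct (inf_approx (in_box p B) F 0) as [m [Hm Happrox]]; auto.
  { exists (fun _ => 0). intros i _. rewrite Rabs_R0. exact HB. }
  apply NNPP. intros Hnomin.
  assert (Hgt : forall b, in_box p B b -> m < F b).
  { intros b Hb. destruct (Rle_lt_dec (F b) m) as [Hle|]; [|assumption].
    exfalso. apply Hnomin. exists b. split; [exact Hb|].
    intros b' Hb'. specialize (Hm b' Hb'). lra. }
  (* every point of the box has a neighbourhood on which [F] stays above [m] by a fixed gap *)
  set (gap t := if Rlt_dec m (F (of_Tn p t)) then (F (of_Tn p t) - m) / 2 else 1).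
  assert (Hgap : forall t, 0 < gap t) by (intros t; unfold gap; destruct Rlt_dec; lra).
  destruct (choice (fun t r => 0 < r /\ forall b', (forall i, (i < p)%nat ->
              Rabs (b' i - of_Tn p t i) < r) -> Rabs (F b' - F (of_Tn p t)) < gap t))
    as [rad Hrad].
  { intros t. exact (HF (of_Tn p t) (gap t) (Hgap t)). }
  set (delta t := mkposreal (Rmin (rad t) (gap t)) (Rmin_pos _ _ (proj1 (Hrad t)) (Hgap t))).
  destruct (compactness_value p (const_Tn p (- B)) (const_Tn p B) delta) as [d Hd].
  destruct (Happrox d (cond_pos d)) as [x [Hx Hxm]].
  apply (Hd (to_Tn p x) (bounded_to_Tn p B x Hx)). intros [t [Ht [Hclose Hdt]]].
  apply in_box_of_Tn in Ht. simpl in Hdt.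
  assert (Hgapt : gap t = (F (of_Tn p t) - m) / 2)
    by (unfold gap; destruct Rlt_dec; [reflexivity|specialize (Hgt _ Ht); lra]).
  assert (Hnear : Rabs (F x - F (of_Tn p t)) < gap t).
  { apply (proj2 (Hrad t)). intros i Hi. rewrite <- (of_to_Tn p x i Hi).
    eapply Rlt_le_trans; [apply (close_of_Tn p _ _ _ Hclose i Hi)|apply Rmin_l]. }
  apply Rabs_def2 in Hnear. pose proof (Rmin_r (rad t) (gap t)). lra.
Qed.

Lemma vcont_coercive_min p K F : vcont p F -> (forall b, 0 <= F b) -> 0 <= K ->
  (forall b i, (i < p)%nat -> Rabs (b i) <= K * F b) -> exists bs, forall b, F bs <= F b.
Proof.
  intros HF HF0 HK Hcoer.
  destruct (vcont_box_min p (K * F (fun _ => 0)) F HF HF0) as [bs [Hbs Hmin]].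
  { apply Rmult_le_pos; auto. }
  exists bs. intros b.
  assert (Hb0 : F bs <= F (fun _ => 0)) by (apply Hmin; intros i _; rewrite Rabs_R0;
    apply Rmult_le_pos; auto).
  destruct (Rlt_le_dec (F b) (F (fun _ => 0))) as [Hlt|]; [|lra].
  apply Hmin. intros i Hi. eapply Rle_trans; [apply Hcoer; exact Hi|].
  apply Rmult_le_compat_l; lra.
Qed.

Definition penalty (k p : nat) (q : nat -> R) (M : nat -> mat) (a b : vec) : R :=
  rsum k (fun j => a j * lqnorm p (q j) (mv p (M j) b)).

Definition cmb (s : R) (u w : vec) : vec := fun l => (1 - s) * u l + s * w l.

Lemma mv_cmb p A s u w i : mv p A (cmb s u w) i = (1 - s) * mv p A u i + s * mv p A w i.
Proof. apply mv_comb. Qed.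

Section Penalty.

Variables (k p : nat) (q : nat -> R) (M : nat -> mat).
Hypothesis Hq : forall j, (j < k)%nat -> 1 <= q j.

Lemma penalty_nonneg a b : (forall j, (j < k)%nat -> 0 <= a j) -> 0 <= penalty k p q M a b.
Proof.
  intros Ha. apply rsum_nonneg. intros j Hj. apply Rmult_le_pos; [auto|apply lqnorm_nonneg].
Qed.

Lemma penalty_scal t a b :
  penalty k p q M (fun j => t * a j) b = t * penalty k p q M a b.
Proof. unfold penalty. rewrite <- rsum_scal. apply rsum_ext. intros; ring. Qed.

Lemma penalty_zero a : penalty k p q M a (fun _ => 0) = 0.
Proof.
  apply rsum_eq0. intros j Hj.
  rewrite (lqnorm_ext p (q j) _ (fun _ => 0)), lqnorm_zero by (intros; apply mv_zero). ring.
Qed.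

Lemma penalty_convex a s u w : (forall j, (j < k)%nat -> 0 <= a j) -> 0 <= s <= 1 ->
  penalty k p q M a (cmb s u w)
  <= (1 - s) * penalty k p q M a u + s * penalty k p q M a w.
Proof.
  intros Ha Hs. unfold penalty. rewrite <- !rsum_scal, <- rsum_plus.
  apply rsum_le. intros j Hj. specialize (Hq j Hj).
  rewrite (lqnorm_ext p (q j) _ (fun i => (1 - s) * mv p (M j) u i + s * mv p (M j) w i))
    by (intros; apply mv_cmb).
  pose proof (lqnorm_triangle p (q j) ltac:(lra) (fun i => (1 - s) * mv p (M j) u i)
                (fun i => s * mv p (M j) w i) Hq) as Htri.
  rewrite !lqnorm_scal in Htri by (auto; lra).
  pose proof (Ha j Hj). nra.
Qed.

Lemma vcont_penalty a : vcont p (penalty k p q M a).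
Proof.
  apply (vcont_rsum p k (fun j b => a j * lqnorm p (q j) (mv p (M j) b))). intros j Hj.
  apply vcont_scal, vcont_lqnorm; [specialize (Hq j Hj); lra|]. intros. apply vcont_mv.
Qed.

Lemma decompose_by_projections (Mp P : nat -> mat) b i :
  mat_eq p p (msum k (fun j => mm p (mm p (P j) (Mp j)) (M j))) idm -> (i < p)%nat ->
  b i = rsum k (fun j => mv p (mm p (P j) (Mp j)) (mv p (M j) b) i).
Proof.
  intros HPsum Hi. rewrite <- (rsum_idm p i b Hi).
  rewrite (rsum_ext p _ (fun m => rsum k (fun j => rsum p (fun l =>
             mm p (P j) (Mp j) i l * (M j l m * b m))))).
  - rewrite rsum_comm. apply rsum_ext. intros j Hj. unfold mv at 1.
    rewrite rsum_comm. apply rsum_ext. intros l Hl. unfold mv. apply rsum_scal.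
  - intros m Hm. rewrite <- (HPsum i m Hi Hm). unfold msum, mm at 1.
    rewrite Rmult_comm, <- rsum_scal. apply rsum_ext. intros j Hj.
    rewrite <- rsum_scal. apply rsum_ext. intros; ring.
Qed.

Lemma penalty_coercive a (Mp P : nat -> mat) :
  (forall j, (j < k)%nat -> 0 < a j) ->
  mat_eq p p (msum k (fun j => mm p (mm p (P j) (Mp j)) (M j))) idm ->
  exists K, 0 <= K /\ forall b i, (i < p)%nat -> Rabs (b i) <= K * penalty k p q M a b.
Proof.
  intros Ha HPsum.
  set (C j i := rsum p (fun l => Rabs (mm p (P j) (Mp j) i l))).
  assert (HC : forall j i, 0 <= C j i) by (intros; apply rsum_nonneg; intros; apply Rabs_pos).
  set (K := rsum k (fun j => rsum p (fun i => C j i / a j))).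
  assert (HCa : forall j i, (j < k)%nat -> 0 <= C j i / a j)
    by (intros; apply Rmult_le_pos; [|left; apply Rinv_0_lt_compat]; auto).
  assert (HCK : forall j i, (j < k)%nat -> (i < p)%nat -> C j i <= K * a j).
  { intros j i Hj Hi. specialize (Ha j Hj).
    assert (C j i / a j <= K).
    { eapply Rle_trans; [apply (rsum_ge_term p (fun i => C j i / a j)); auto|].
      apply (rsum_ge_term k (fun j => rsum p (fun i => C j i / a j))); auto.
      intros; apply rsum_nonneg; auto. }
    replace (C j i) with (C j i / a j * a j) by (field; lra). nra. }
  exists K. split; [apply rsum_nonneg; intros; apply rsum_nonneg; auto|].
  intros b i Hi. rewrite (decompose_by_projections Mp P b i HPsum Hi).
  eapply Rle_trans; [apply Rabs_rsum_le|].
  unfold penalty. rewrite <- rsum_scal. apply rsum_le. intros j Hj.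
  assert (Hqj : 1 <= q j) by auto.
  apply Rle_trans with (C j i * lqnorm p (q j) (mv p (M j) b)).
  - eapply Rle_trans; [apply Rabs_rsum_le|]. unfold C. rewrite Rmult_comm, <- rsum_scal.
    apply rsum_le. intros l Hl. rewrite Rabs_mult, Rmult_comm.
    apply Rmult_le_compat_r; [apply Rabs_pos|apply Rabs_le_lqnorm; auto; lra].
  - rewrite <- Rmult_assoc. apply Rmult_le_compat_r; [apply lqnorm_nonneg|auto].
Qed.

End Penalty.

Lemma cmb_0 u w : cmb 0 u w = u.
Proof. extensionality l. unfold cmb. ring. Qed.

Lemma derivable_pt_lim_le_slope f l C : derivable_pt_lim f 0 l ->
  (forall s, 0 < s < 1 -> f s - f 0 <= s * C) -> l <= C.
Proof.
  intros Hf Hslope. apply Rnot_lt_le. intros HCl.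
  destruct (Hf ((l - C) / 2)) as [d Hd]; [lra|].
  pose proof (cond_pos d) as Hd0.
  set (s := Rmin (d / 2) (1 / 2)).
  assert (Hs : 0 < s) by (apply Rmin_pos; lra).
  pose proof (Rmin_l (d / 2) (1 / 2)). pose proof (Rmin_r (d / 2) (1 / 2)). fold s in H, H0.
  specialize (Hd s ltac:(lra) ltac:(rewrite Rabs_pos_eq; lra)).
  rewrite Rplus_0_l in Hd. apply Rabs_def2 in Hd.
  specialize (Hslope s ltac:(lra)).
  set (Q := (f s - f 0) / s) in Hd.
  assert (Q * s = f s - f 0) by (unfold Q; field; lra).
  nra.
Qed.

Definition res (p : nat) (X : mat) (Y b : vec) : vec := fun i => Y i - mv p X b i.

Section Residual.

Variables (n p : nat) (X : mat) (Y : vec).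

Lemma resid_nonneg b : 0 <= resid n p X Y b.
Proof. apply sqnorm2_nonneg. Qed.

Lemma res_cmb s u w i : res p X Y (cmb s u w) i = (1 - s) * res p X Y u i + s * res p X Y w i.
Proof. unfold res. rewrite mv_cmb. ring. Qed.

Lemma resid_cmb s u w :
  resid n p X Y (cmb s u w)
  = resid n p X Y u - 2 * s * dot n (res p X Y u) (fun i => mv p X w i - mv p X u i)
    + s * s * sqnorm2 n (fun i => mv p X w i - mv p X u i).
Proof.
  unfold resid. rewrite <- sqnorm2_sub_scal. apply sqnorm2_ext. intros i _.
  unfold res. rewrite mv_cmb. ring.
Qed.

Lemma resid_cmb_derivable u w :
  derivable_pt_lim (fun s => resid n p X Y (cmb s u w)) 0
    (- 2 * dot n (res p X Y u) (fun i => mv p X w i - mv p X u i)).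
Proof.
  eapply derivable_pt_lim_ext; [intros s; symmetry; apply resid_cmb|].
  apply is_derive_Reals. auto_derive; [exact I|ring].
Qed.

Lemma vcont_resid : vcont p (resid n p X Y).
Proof.
  apply (vcont_ext p (fun b => rsum n (fun i => (fun z => z * z) (Y i + -1 * mv p X b i)))).
  { intros b. apply rsum_ext. intros; ring. }
  apply (vcont_rsum p n (fun i b => (fun z => z * z) (Y i + -1 * mv p X b i))).
  intros i Hi. apply (vcont_comp p (fun z => z * z)).
  - intros. apply derivable_continuous_pt. reg.
  - apply vcont_plus; [apply vcont_const|apply vcont_scal, vcont_mv].
Qed.

End Residual.

Section Optimality.

Variables (n p k : nat) (X : mat) (Y : vec) (M : nat -> mat) (q : nat -> R).
Hypothesis Hq : forall j, (j < k)%nat -> 1 <= q j.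

Section HalfResidual.

Variable a : vec.
Hypothesis Ha : forall j, (j < k)%nat -> 0 <= a j.
Variable bs : vec.
Hypothesis Hmin : forall b, resid n p X Y bs / 2 + penalty k p q M a bs
                            <= resid n p X Y b / 2 + penalty k p q M a b.

Lemma min_variational b :
  dot n (res p X Y bs) (fun i => mv p X b i - mv p X bs i)
  <= penalty k p q M a b - penalty k p q M a bs.
Proof.
  apply (derivable_pt_lim_le_slope (fun s => - / 2 * resid n p X Y (cmb s bs b))).
  - replace (dot n _ _) with (- / 2 * (- 2 * dot n (res p X Y bs)
               (fun i => mv p X b i - mv p X bs i))) by field.
    apply (derivable_pt_lim_scal (fun s => resid n p X Y (cmb s bs b))), resid_cmb_derivable.
  - intros s Hs. cbv beta. rewrite cmb_0.
    pose proof (Hmin (cmb s bs b)).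
    pose proof (penalty_convex k p q M Hq a s bs b Ha ltac:(lra)). lra.
Qed.

Lemma resid_pos_of_min (K : R) : (exists i, (i < n)%nat /\ Y i <> 0) ->
  (forall b i, (i < p)%nat -> Rabs (b i) <= K * penalty k p q M a b) ->
  0 < resid n p X Y bs.
Proof.
  intros [i0 [Hi0 HY0]] Hcoer.
  destruct (sqnorm2_nonneg n (res p X Y bs)) as [Hpos|Hzero]; [exact Hpos|exfalso].
  pose proof (sqnorm2_eq0 n _ (eq_sym Hzero)) as Hres.
  (* at a perfect fit the first-order condition towards [0] forces the penalty to vanish *)
  assert (Hpen : penalty k p q M a bs <= 0).
  { pose proof (min_variational (fun _ => 0)) as Hvar.
    rewrite penalty_zero in Hvar by exact Hq.
    unfold dot in Hvar. rewrite (rsum_eq0 n) in Hvar; [lra|].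
    intros i Hi. rewrite Hres by exact Hi. ring. }
  assert (Hbs : forall l, (l < p)%nat -> bs l = 0).
  { pose proof (penalty_nonneg k p q M a bs Ha).
    intros l Hl. pose proof (Hcoer bs l Hl) as Hl'.
    replace (penalty k p q M a bs) with 0 in Hl' by lra.
    apply Rabs_eq_0. pose proof (Rabs_pos (bs l)). lra. }
  apply HY0. specialize (Hres i0 Hi0). unfold res in Hres.
  rewrite (mv_ext p X bs (fun _ => 0)), mv_zero in Hres by exact Hbs. lra.
Qed.

End HalfResidual.

Section Link.

Variables g g' : R -> R.
Hypothesis Hg_sconv : forall (u w : vec) (t : R),
  (exists i, (i < n)%nat /\ u i <> w i) -> 0 < t < 1 ->
  g (sqnorm2 n (fun i => t * u i + (1 - t) * w i))
  < t * g (sqnorm2 n u) + (1 - t) * g (sqnorm2 n w).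

Lemma g_resid_strict_convex s u w : 0 < s < 1 ->
  (exists i, (i < n)%nat /\ res p X Y w i <> res p X Y u i) ->
  g (resid n p X Y (cmb s u w)) < (1 - s) * g (resid n p X Y u) + s * g (resid n p X Y w).
Proof.
  intros Hs Hdiff.
  replace (resid n p X Y (cmb s u w))
    with (sqnorm2 n (fun i => s * res p X Y w i + (1 - s) * res p X Y u i))
    by (apply sqnorm2_ext; intros; unfold res; rewrite mv_cmb; ring).
  pose proof (Hg_sconv _ _ s Hdiff Hs).
  change (resid n p X Y u) with (sqnorm2 n (res p X Y u)).
  change (resid n p X Y w) with (sqnorm2 n (res p X Y w)). lra.
Qed.

Lemma g_resid_convex s u w : 0 < s < 1 ->
  g (resid n p X Y (cmb s u w)) <= (1 - s) * g (resid n p X Y u) + s * g (resid n p X Y w).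
Proof.
  intros Hs. destruct (classic (exists i, (i < n)%nat /\ res p X Y w i <> res p X Y u i))
    as [Hdiff|Hsame]; [left; now apply g_resid_strict_convex|].
  assert (E : forall i, (i < n)%nat -> res p X Y w i = res p X Y u i)
    by (intros i Hi; apply NNPP; intros Hne; apply Hsame; now exists i).
  assert (Ew : resid n p X Y w = resid n p X Y u) by (now apply sqnorm2_ext).
  assert (Es : resid n p X Y (cmb s u w) = resid n p X Y u)
    by (apply sqnorm2_ext; intros i Hi; change (res p X Y (cmb s u w) i = res p X Y u i);
        rewrite res_cmb, E by exact Hi; ring).
  rewrite Es, Ew. lra.
Qed.

Lemma minimizers_same_res lam b1 b2 : (forall j, (j < k)%nat -> 0 <= lam j) ->
  is_minimizer n p k g X Y M q lam b1 -> is_minimizer n p k g X Y M q lam b2 ->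
  forall i, (i < n)%nat -> res p X Y b1 i = res p X Y b2 i.
Proof.
  intros Hlam H1 H2 i Hi. apply NNPP. intros Hne.
  pose proof (g_resid_strict_convex (1 / 2) b1 b2 ltac:(lra)
                (ex_intro _ i (conj Hi (not_eq_sym Hne)))).
  pose proof (penalty_convex k p q M Hq lam (1 / 2) b1 b2 Hlam ltac:(lra)).
  specialize (H1 (cmb (1 / 2) b1 b2)). specialize (H2 b1).
  unfold objective in *. fold (penalty k p q M lam b1) (penalty k p q M lam b2) in *.
  fold (penalty k p q M lam (cmb (1 / 2) b1 b2)) in *. lra.
Qed.

Variable a : vec.
Hypothesis Ha : forall j, (j < k)%nat -> 0 <= a j.
Hypothesis Hg_deriv : forall x, 0 < x -> derivable_pt_lim g x (g' x).
Hypothesis Hg'_pos : forall x, 0 < x -> 0 < g' x.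

Lemma min_link bs :
  (forall b, resid n p X Y bs / 2 + penalty k p q M a bs
             <= resid n p X Y b / 2 + penalty k p q M a b) ->
  0 < resid n p X Y bs ->
  is_minimizer n p k g X Y M q (fun j => 2 * g' (resid n p X Y bs) * a j) bs.
Proof.
  intros Hmin HR b. unfold objective.
  fold (penalty k p q M (fun j => 2 * g' (resid n p X Y bs) * a j) bs)
       (penalty k p q M (fun j => 2 * g' (resid n p X Y bs) * a j) b).
  rewrite !penalty_scal.
  set (R0 := resid n p X Y bs).
  set (L := - 2 * dot n (res p X Y bs) (fun i => mv p X b i - mv p X bs i)).
  assert (Hder : derivable_pt_lim (fun s => g (resid n p X Y (cmb s bs b))) 0 (g' R0 * L)).
  { apply (derivable_pt_lim_comp (fun s => resid n p X Y (cmb s bs b)) g).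
    - apply resid_cmb_derivable.
    - rewrite cmb_0. now apply Hg_deriv. }
  assert (Hslope : g' R0 * L <= g (resid n p X Y b) - g R0).
  { apply (derivable_pt_lim_le_slope _ _ _ Hder). intros s Hs. cbv beta. rewrite cmb_0.
    pose proof (g_resid_convex s bs b Hs) as Hconv. fold R0 in Hconv |- *. lra. }
  assert (Hvar : 0 <= L + 2 * (penalty k p q M a b - penalty k p q M a bs))
    by (pose proof (min_variational a Ha bs Hmin b); unfold L; lra).
  pose proof (Rmult_le_pos _ _ (Rlt_le _ _ (Hg'_pos R0 HR)) Hvar). nra.
Qed.

End Link.

End Optimality.

Theorem lemma1
  (n p k : nat) (X : mat) (Y bstar eps : vec)
  (g g' : R -> R) (M Mp P : nat -> mat) (q c : nat -> R)
  (* model *)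
  (HY : forall i, (i < n)%nat -> Y i = mv p X bstar i + eps i)
  (* link function *)
  (Hg_nonneg : forall x, 0 <= x -> 0 <= g x)
  (Hg0 : g 0 = 0)
  (Hg_cont : forall x, 0 <= x -> limit1_in g (fun y => 0 <= y) (g x) x)
  (Hg_incr : forall x y, 0 <= x -> x < y -> g x < g y)
  (Hg_deriv : forall x, 0 < x -> derivable_pt_lim g x (g' x))
  (Hg'_cont : forall x, 0 < x -> continuity_pt g' x)
  (Hg'_pos : forall x, 0 < x -> 0 < g' x)
  (Hg'_noninc : forall x y, 0 < x -> x <= y -> g' y <= g' x)
  (Hg_sconv : forall (a b : vec) (t : R),
      (exists i, (i < n)%nat /\ a i <> b i) -> 0 < t < 1 ->
      g (sqnorm2 n (fun i => t * a i + (1 - t) * b i))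
        < t * g (sqnorm2 n a) + (1 - t) * g (sqnorm2 n b))
  (* penalty *)
  (Hk : (1 <= k)%nat)
  (Hker : forall b : vec,
      (forall j, (j < k)%nat -> forall i, (i < p)%nat -> mv p (M j) b i = 0) ->
      forall i, (i < p)%nat -> b i = 0)
  (Hq : forall j, (j < k)%nat -> 1 <= q j)
  (HMp : forall j, (j < k)%nat -> is_pinv p p (M j) (Mp j))
  (HP : forall j, (j < k)%nat -> mat_eq p p (mm p (P j) (P j)) (P j))
  (HPsum : mat_eq p p (msum k (fun j => mm p (mm p (P j) (Mp j)) (M j))) idm)
  (* noise assumption (realization-wise) *)
  (HY0 : exists i, (i < n)%nat /\ Y i <> 0)
  (Hnoise : forall j, (j < k)%nat ->
      0 < dualnorm p (q j) (mv n (tr (mm p (mm p X (P j)) (Mp j))) eps))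
  (* constants *)
  (Hc : forall j, (j < k)%nat -> 0 < c j) :
  exists lam : vec,
    (forall j, (j < k)%nat -> 0 < lam j) /\
    (exists b : vec, is_minimizer n p k g X Y M q lam b) /\
    (forall b : vec, is_minimizer n p k g X Y M q lam b ->
       0 < resid n p X Y b /\
       forall j, (j < k)%nat ->
         lam j / (2 * g' (resid n p X Y b))
         = c j * dualnorm p (q j) (mv n (tr (mm p (mm p X (P j)) (Mp j))) eps)).
Proof.
  set (a j := c j * dualnorm p (q j) (mv n (tr (mm p (mm p X (P j)) (Mp j))) eps)).
  assert (Ha : forall j, (j < k)%nat -> 0 < a j) by (intros; apply Rmult_lt_0_compat; auto).
  assert (Ha' : forall j, (j < k)%nat -> 0 <= a j) by (intros; left; auto).
  destruct (penalty_coercive k p q M Hq a Mp P Ha HPsum) as [K [HK Hcoer]].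
  set (Phi b := resid n p X Y b / 2 + penalty k p q M a b).
  assert (HPhi : forall b, penalty k p q M a b <= Phi b /\ 0 <= Phi b).
  { intros b. pose proof (resid_nonneg n p X Y b).
    pose proof (penalty_nonneg k p q M a b Ha'). unfold Phi. lra. }
  destruct (vcont_coercive_min p K Phi) as [bs Hbs].
  { apply (vcont_ext p (fun b => / 2 * resid n p X Y b + penalty k p q M a b));
      [intros; unfold Phi; lra|].
    apply vcont_plus; [apply vcont_scal, vcont_resid|apply vcont_penalty; auto]. }
  { apply HPhi. }
  { exact HK. }
  { intros b i Hi. eapply Rle_trans; [apply (Hcoer b i Hi)|].
    apply Rmult_le_compat_l; [exact HK|apply HPhi]. }
  assert (HR := resid_pos_of_min n p k X Y M q Hq a Ha' bs Hbs K HY0 Hcoer).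
  pose proof (Hg'_pos _ HR).
  set (lam j := 2 * g' (resid n p X Y bs) * a j).
  assert (Hlam : forall j, (j < k)%nat -> 0 < lam j)
    by (intros; apply Rmult_lt_0_compat; auto; lra).
  assert (Hbs_lam : is_minimizer n p k g X Y M q lam bs) by now apply min_link.
  exists lam. split; [exact Hlam|split; [now exists bs|]].
  intros b Hb.
  assert (E : resid n p X Y b = resid n p X Y bs).
  { apply sqnorm2_ext, (minimizers_same_res n p k X Y M q Hq g Hg_sconv lam); auto.
    intros j Hj. now apply Rlt_le, Hlam. }
  rewrite E. split; [exact HR|]. intros j Hj. unfold lam, a. field. lra.
Qed.
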